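(* Let $n$ be a positive integer, $x\in\Gamma_n$ and $z\in\{r,b\}^n$. Then \[ \tilde\xi_n(x,z)=n-\tfrac12+\tfrac12\,\#_{\mathrm{dl}}(x)+\tfrac12\,W_{\mathrm{tot}}(G_x)-\mathrm{wt}_{G_x}(z). \]
   Context: Let $[n]=\{1,\dots,n\}$. $\Gamma_n$ is the set of words $x=(x_1,\dots,x_{2n})\in[n]^{2n}$ in which every symbol of $[n]$ occurs exactly twice. Colours are formal symbols $r,b$; $\neg$ swaps them, $\neg^0$ is the identity, $\neg^1=\neg$. $[\,\cdot\,]$ is the Iverson bracket. For $f\in\{r,b\}^{2n}$, $\xi_n(f)=\sum_{i=1}^{2n-1}[f_i\neq f_{i+1}]$. For $z\in\{r,b\}^n$, $\mathcal E_n(x,z)_i=\neg^{[x_i\in\{x_1,\dots,x_{i-1}\}]}z_{x_i}$ and $\tilde\xi_n(x,z)=\xi_n(\mathcal E_n(x,z))$. For $i\in[2n-1]$, $\eta(x,i)=[x_{i+1}\in\{x_1,\dots,x_i\}]\oplus[x_i\in\{x_1,\dots,x_{i-1}\}]$. For $e\subseteq[n]$, $\theta_x(e)=-\sum_{i=1}^{2n-1}(-1)^{\eta(x,i)}\delta_{e,\{x_i,x_{i+1}\}}$. The BPSP graph $G_x=(V_x,E_x,W_x)$ has $V_x=[n]$, $E_x=\{\{x_i,x_{i+1}\}: i\in[2n-1],\ x_i\neq x_{i+1},\ \theta_x(\{x_i,x_{i+1}\})\neq0\}$, $W_x=\theta_x|_{E_x}$; $W_{\mathrm{tot}}(G_x)=\sum_{e\in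 E_x}W_x(e)$; $\mathrm{wt}_{G_x}(z)=\sum_{\{i,j\}\in E_x}W_x(\{i,j\})[z_i\neq z_j]$. $\#_{\mathrm{dl}}(x)=|\{i\in[2n-1]:x_i=x_{i+1}\}|$. *)

(* Positions in words are 0-indexed internally
   (position i here = position i+1 in the paper); symbols are 1..n. *)
From HB Require Import structures.
From mathcomp Require Import all_boot all_order all_algebra.
Set Implicit Arguments. Unset Strict Implicit. Unset Printing Implicit Defensive.
Import Order.TTheory GRing.Theory Num.Theory.

Inductive colour := r | b.
Definition neg (c : colour) : colour := match c with r => b | b => r end.
Definition colour_eqb (c d : colour) : bool :=
  match c, d with r, r | b, b => true | _, _ => false end.
Lemma colour_eqP : Equality.axiom colour_eqb.
Proof. by case; case; constructor. Qed.
HB.instance Definition _ := hasDecEq.Build colour colour_eqP.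

Definition Gamma (n : nat) (x : seq nat) : Prop :=
  size x = 2 * n /\ (forall a, a \in x -> 1 <= a <= n) /\
  (forall a, 1 <= a <= n -> count_mem a x = 2).

Definition xat (x : seq nat) (i : nat) : nat := nth 0 x i.

Definition zat (n : nat) (z : n.-tuple colour) (k : nat) : colour := nth r z k.-1.

Definition seen (x : seq nat) (i : nat) : bool := xat x i \in take i x.

Definition xi (n : nat) (f : seq colour) : nat :=
  \sum_(0 <= i < (2 * n).-1) (nth r f i != nth r f i.+1).

Definition Enc (n : nat) (x : seq nat) (z : n.-tuple colour) : seq colour :=
  [seq (if seen x i then neg (zat z (xat x i)) else zat z (xat x i))
  | i <- iota 0 (2 * n)].

Definition xi_tilde (n : nat) (x : seq nat) (z : n.-tuple colour) : nat :=
  xi n (Enc x z).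

Definition eta (x : seq nat) (i : nat) : bool := seen x i.+1 (+) seen x i.

Definition upair (a c : nat) : nat * nat := (minn a c, maxn a c).

Definition theta (n : nat) (x : seq nat) (e : nat * nat) : int :=
  - \sum_(0 <= i < (2 * n).-1)
      ((-1) ^+ eta x i * (e == upair (xat x i) (xat x i.+1))%:R)%R.

Definition Ex (n : nat) (x : seq nat) : seq (nat * nat) :=
  undup [seq upair (xat x i) (xat x i.+1) | i <- iota 0 (2 * n).-1 &
          (xat x i != xat x i.+1) && (theta n x (upair (xat x i) (xat x i.+1)) != 0%R)].

Definition Wtot (n : nat) (x : seq nat) : int :=
  (\sum_(e <- Ex n x) theta n x e)%R.

Definition wt (n : nat) (x : seq nat) (z : n.-tuple colour) : int :=
  (\sum_(e <- Ex n x) theta n x e * (zat z e.1 != zat z e.2)%:R)%R.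

Definition ndl (n : nat) (x : seq nat) : nat :=
  \sum_(0 <= i < (2 * n).-1) (xat x i == xat x i.+1).

From mathcomp Require Import all_boot all_order all_algebra.
From mathcomp Require Import zify lra.
Set Implicit Arguments. Unset Strict Implicit. Unset Printing Implicit Defensive.
Import Order.TTheory GRing.Theory Num.Theory.
Local Open Scope ring_scope.

(* The exponents of [neg] at positions i and i+1 of the encoding differ exactly
   by eta(x,i), so the colour changes at i iff eta(x,i) xor [z_{x_i} != z_{x_{i+1}}],
   i.e. the change counts (1 - (-1)^eta)/2 + (-1)^eta [z_{x_i} != z_{x_{i+1}}].
   Unfolding theta and exchanging sums, W_tot and wt become sums over the
   positions i with x_i != x_{i+1} of -(-1)^eta and -(-1)^eta [z_{x_i} != z_{x_{i+1}}];
   since E_x has no repeated edge and no loop, every such position is counted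
   exactly once, and dropping the edges of weight 0 changes nothing.  At a double
   letter x_i = x_{i+1} the first copy is unseen and the second seen, so eta = 1
   and the colour changes; this is the 1/2 + #_dl/2 term. *)

Lemma sum_pred1_uniq (R : pzSemiRingType) (T : eqType) (s : seq T) (p : T)
    (g : T -> R) :
  uniq s -> \sum_(e <- s) (e == p)%:R * g e = (p \in s)%:R * g p.
Proof.
elim: s => [|a s IHs] /=; first by rewrite big_nil mul0r.
case/andP=> a_notin_s uniq_s; rewrite big_cons IHs // in_cons.
case: (eqVneq a p) => [<-|ne_ap] /=; last by rewrite mul0r add0r.
by rewrite (negbTE a_notin_s) mul0r addr0.
Qed.

Lemma upair_eq_diag a c d : upair a c = upair d d -> a = c.
Proof. by rewrite /upair => -[]; lia. Qed.

Lemma upair_neq (T : eqType) (f : nat -> T) a c :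
  (f (upair a c).1 != f (upair a c).2) = (f a != f c).
Proof. by rewrite /upair; case: leqP => //= _; rewrite eq_sym. Qed.

Section EdgeSums.
Variables (n : nat) (x : seq nat).
Local Notation m := (2 * n).-1.
Local Notation adj i := (upair (xat x i) (xat x i.+1)).
Local Notation distinct i := (xat x i != xat x i.+1).

Definition adjacent_pairs : seq (nat * nat) :=
  undup [seq adj i | i <- index_iota 0 m & distinct i].

Lemma Ex_filter : Ex n x = [seq e <- adjacent_pairs | theta n x e != 0].
Proof.
rewrite /Ex /adjacent_pairs filter_undup filter_map -filter_predI.
congr undup; rewrite /index_iota subn0; congr map.
by apply: eq_filter => i /=; rewrite andbC.
Qed.

Lemma mem_adjacent_pairs i :
  (i < m)%N -> (adj i \in adjacent_pairs) = distinct i.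
Proof.
move=> lt_im; rewrite mem_undup; apply/mapP/idP => [[j]|distinct_i].
  rewrite mem_filter => /andP[distinct_j _] eq_adj.
  apply: contraTneq distinct_j => eq_i; rewrite negbK.
  by apply/eqP/(@upair_eq_diag _ _ (xat x i)); rewrite -eq_adj -eq_i.
by exists i; rewrite // mem_filter distinct_i mem_index_iota.
Qed.

Lemma theta_intr (R : pzRingType) e :
  (theta n x e)%:~R = - \sum_(0 <= i < m) (-1) ^+ eta x i * (e == adj i)%:R :> R.
Proof.
rewrite rmorphN rmorph_sum; congr (- _); apply: eq_bigr => i _.
by rewrite rmorphM /= rmorphXn rmorphN1 rmorph_nat.
Qed.

Lemma sum_Ex_theta (R : comPzRingType) (h : nat * nat -> R) :
  \sum_(e <- Ex n x) (theta n x e)%:~R * h e =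
  - \sum_(0 <= i < m) (distinct i)%:R * (-1) ^+ eta x i * h (adj i).
Proof.
rewrite Ex_filter big_filter big_rmcond => [|e /negPn/eqP ->]; last by rewrite mul0r.
under eq_bigr => e _ do rewrite theta_intr mulNr mulr_suml.
rewrite sumrN exchange_big; congr (- _); apply: eq_big_nat => i /andP[_ lt_im].
under eq_bigr => e _ do rewrite -mulrA.
rewrite -mulr_sumr sum_pred1_uniq ?undup_uniq // mem_adjacent_pairs //.
by rewrite mulrA [_ * _%:R]mulrC.
Qed.

Lemma Wtot_intr (R : comPzRingType) :
  (Wtot n x)%:~R = - \sum_(0 <= i < m) (distinct i)%:R * (-1) ^+ eta x i :> R.
Proof.
rewrite rmorph_sum.
transitivity (\sum_(e <- Ex n x) (theta n x e)%:~R * (1 : R)).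
  by apply: eq_bigr => e _; rewrite mulr1.
by rewrite sum_Ex_theta; under eq_bigr => i _ do rewrite mulr1.
Qed.

Lemma wt_intr (R : comPzRingType) (z : n.-tuple colour) :
  (wt x z)%:~R = - \sum_(0 <= i < m)
    (distinct i)%:R * (-1) ^+ eta x i * (zat z (xat x i) != zat z (xat x i.+1))%:R
  :> R.
Proof.
rewrite rmorph_sum.
under eq_bigr => e _ do rewrite rmorphM /= rmorph_nat.
by rewrite sum_Ex_theta; under eq_bigr => i _ do rewrite upair_neq.
Qed.

End EdgeSums.

Lemma seen_double_letter x i :
  (i.+1 < size x)%N -> xat x i = xat x i.+1 -> seen x i.+1.
Proof.
move=> lt_i1_x eq_i; rewrite /seen -eq_i; apply/(nthP 0); exists i.
  by rewrite size_takel // ltnW.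
by rewrite nth_take.
Qed.

Lemma unseen_double_letter x i :
  (i.+1 < size x)%N -> (count_mem (xat x i) x <= 2)%N ->
  xat x i = xat x i.+1 -> ~~ seen x i.
Proof.
move=> lt_i1_x count_le2 eq_i; apply: contraTN count_le2 => seen_i.
have lt_i_x : (i < size x)%N by apply: ltnW.
have count_x a : count_mem a x =
    (count_mem a (take i x) + (xat x i == a) + (xat x i.+1 == a)
     + count_mem a (drop i.+2 x))%N.
  rewrite -{1}(cat_take_drop i x) count_cat (drop_nth 0 lt_i_x).
  by rewrite (drop_nth 0 lt_i1_x) /= !addnA.
have : (0 < count_mem (xat x i) (take i x))%N by rewrite -has_count has_pred1.
rewrite -ltnNge count_x -eq_i eqxx; lia.
Qed.

Lemma eta_double_letter n x i :
  Gamma n x -> (i < (2 * n).-1)%N -> xat x i = xat x i.+1 -> eta x i.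
Proof.
move=> [size_x [x_range x_count]] lt_im eq_i.
have lt_i1_x : (i.+1 < size x)%N by rewrite size_x; lia.
have count_i : count_mem (xat x i) x = 2%N.
  by apply/x_count/x_range/mem_nth/ltnW.
have not_seen_i : ~~ seen x i by apply: unseen_double_letter; rewrite ?count_i.
by rewrite /eta seen_double_letter // (negbTE not_seen_i).
Qed.

Lemma neg_if_neq (s t : bool) (c d : colour) :
  ((if s then neg c else c) != (if t then neg d else d)) = s (+) t (+) (c != d).
Proof. by case: s; case: t; case: c; case: d. Qed.

Lemma nth_Enc n x (z : n.-tuple colour) i : (i < 2 * n)%N ->
  nth r (Enc x z) i = if seen x i then neg (zat z (xat x i)) else zat z (xat x i).
Proof. by move=> lt_i2n; rewrite /Enc (nth_map 0) ?size_iota ?nth_iota. Qed.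

Lemma Enc_neq_succ n x (z : n.-tuple colour) i : (i.+1 < 2 * n)%N ->
  (nth r (Enc x z) i != nth r (Enc x z) i.+1) =
    eta x i (+) (zat z (xat x i) != zat z (xat x i.+1)).
Proof.
move=> lt_i1_2n; rewrite !nth_Enc ?(ltnW lt_i1_2n) // neg_if_neq.
by rewrite /eta [seen x i.+1 (+) _]addbC.
Qed.

Theorem corollary3 (n : nat) (x : seq nat) (z : n.-tuple colour) :
  (0 < n)%N -> Gamma n x ->
  ((xi_tilde x z)%:R : rat) =
    n%:R - 1 / 2 + (ndl n x)%:R / 2 + (Wtot n x)%:~R / 2 - (wt x z)%:~R.
Proof.
move=> n_gt0 Gx.
have half_sum : n%:R - 1 / 2 = \sum_(0 <= i < (2 * n).-1) (1 / 2 : rat).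
  rewrite sumr_const_nat subn0 -(mulr_natr (1 / 2)) -subn1 natrB ?natrM; [lra|lia].
rewrite /xi_tilde /xi /ndl !natr_sum Wtot_intr wt_intr half_sum.
rewrite !mulNr opprK !mulr_suml -big_split -sumrB -big_split /=.
apply: eq_big_nat => i /andP[_ lt_im]; rewrite Enc_neq_succ; last by lia.
case: (eqVneq (xat x i) (xat x i.+1)) => [eq_i|_] /=.
  by rewrite (eta_double_letter Gx lt_im eq_i) eq_i eqxx /=; lra.
by case: (eta x i); case: (_ != _); rewrite /= ?expr0 ?expr1; lra.
Qed.
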